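(* If $U$ is a unicyclic graph, then every nontrivial 2-switch between two edges of $\operatorname{Cycles}(U)$ is a p-switch over $U$.
   Context: Graphs are finite, simple, undirected, labeled. A unicyclic graph is a connected graph with exactly one cycle; a pseudoforest is a graph each of whose components is a tree or a unicyclic graph. For vertices $a,b,c,d$, $A=\binom{a\ b}{c\ d}$ is interchangeable in $G$ if $ab,cd\in E(G)$, $\{a,b\}\cap\{c,d\}=\varnothing$, $ac,bd\notin E(G)$; the 2-switch $\tau_A$ sends $G$ to $G-ab-cd+ac+bd$ if $A$ is interchangeable and to $G$ otherwise (trivial); a 2-switch between edges $ab,cd$ is $\tau_A$ with $A=\binom{a\ b}{c\ d}$. A nontrivial 2-switch $\tau$ over a pseudoforest $G$ is a p-switch if $\tau(G)$ is a pseudoforest. $\operatorname{Cycles}(H)$ is the subgraph induced by vertices lying on some cycle of $H$. *)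

(* Graphs on a finite vertex type T are symmetric irreflexive
   boolean relations G : rel T (finite, simple, undirected, labeled). *)
From mathcomp Require Import all_boot.
Set Implicit Arguments. Unset Strict Implicit. Unset Printing Implicit Defensive.

Section Graphs.
Variable T : finType.

Definition edges (G : rel T) : {set {set T}} :=
  [set [set p.1; p.2] | p in [set p : T * T | G p.1 p.2]].

Definition restrict (G : rel T) (S : {set T}) : rel T :=
  fun x y => [&& x \in S, y \in S & G x y].

Definition is_cycle (G : rel T) (F : {set {set T}}) : Prop :=
  [/\ F \subset edges G, F != set0,
      forall v, v \in cover F -> #|[set e in F | v \in e]| = 2
    & forall u v, u \in cover F -> v \in cover F ->
        connect (fun x y => [set x; y] \in F) u v].

Definition connected_on (G : rel T) (S : {set T}) : Prop :=
  S != set0 /\ forall x y, x \in S -> y \in S -> connect (restrict G S) x y.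

Definition tree_on (G : rel T) (S : {set T}) : Prop :=
  connected_on G S /\ forall F, ~ is_cycle (restrict G S) F.

Definition unicyclic_on (G : rel T) (S : {set T}) : Prop :=
  connected_on G S /\
  exists F, is_cycle (restrict G S) F /\
            forall F', is_cycle (restrict G S) F' -> F' = F.

Definition unicyclic (G : rel T) : Prop := unicyclic_on G setT.

Definition component (G : rel T) (x : T) : {set T} := [set y | connect G x y].

Definition pseudoforest (G : rel T) : Prop :=
  forall x, tree_on G (component G x) \/ unicyclic_on G (component G x).

(* v lies on some cycle of G, i.e. v is a vertex of Cycles(G) *)
Definition on_cycle (G : rel T) (v : T) : Prop :=
  exists F, is_cycle G F /\ v \in cover F.

Definition upair (x y a b : T) : bool :=
  ((x == a) && (y == b)) || ((x == b) && (y == a)).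

Definition interchangeable (G : rel T) (a b c d : T) : bool :=
  [&& G a b, G c d, a != c, a != d, b != c, b != d, ~~ G a c & ~~ G b d].

Definition two_switch (G : rel T) (a b c d : T) : rel T :=
  fun x y =>
    if interchangeable G a b c d then
      (G x y && ~~ (upair x y a b || upair x y c d)) || upair x y a c || upair x y b d
    else G x y.

Definition p_switch (G : rel T) (a b c d : T) : Prop :=
  [/\ pseudoforest G, interchangeable G a b c d & pseudoforest (two_switch G a b c d)].

End Graphs.

(* Call an edge set even when all its vertex degrees are even; every nonempty
   even edge set contains a cycle.  In the unicyclic graph U with cycle C the
   only even edge sets are therefore the empty set and C, so an edge between
   two vertices of C lies on C: ab and cd are edges of C.  The switched graph
   has edge set E0 + {ac, bd} with E0 = E(U) - {ab, cd}, and E0 carries no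
   nonempty even set; hence a cycle of the switched graph contains ac or bd and
   is determined by which of them it contains.  If it contains ac but not bd,
   removing ac leaves an edge set of E0 whose odd-degree vertices are a and c.
   The only edge set of E(U) - {ab} with odd-degree vertices a and b is
   C - {ab}, which uses cd; so b is not E0-reachable from a or c, and
   likewise for d.  Thus a and b lie in different components, and two
   different cycles of the switched graph never share a component. *)

From Stdlib Require Import Classical FunctionalExtensionality.
From mathcomp Require Import all_boot.
Set Implicit Arguments. Unset Strict Implicit. Unset Printing Implicit Defensive.

Definition symd (X : finType) (A B : {set X}) : {set X} := (A :\: B) :|: (B :\: A).

Lemma in_symd (X : finType) (A B : {set X}) x : (x \in symd A B) = (x \in A) (+) (x \in B).
Proof. by rewrite !inE; case: (x \in A); case: (x \in B). Qed.

Lemma symd_eq0 (X : finType) (A B : {set X}) : symd A B = set0 -> A = B.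
Proof.
move/setP => AB0; apply/setP => x; move: (AB0 x); rewrite in_symd inE.
by case: (x \in A); case: (x \in B).
Qed.

Lemma odd_card_symd (X : finType) (A B : {set X}) :
  odd #|symd A B| = odd #|A| (+) odd #|B|.
Proof.
rewrite cardsU (_ : _ :&: _ = set0) ?cards0 ?subn0 ?cardsD; last first.
  by apply/setP => x; rewrite !inE; case: (x \in A); case: (x \in B).
rewrite oddD !oddB ?subset_leq_card ?subsetIl // setIC.
by case: (odd #|A|); case: (odd #|B|); case: (odd #|B :&: A|).
Qed.

Section EdgeSets.
Variable T : finType.
Implicit Types (E K P : {set {set T}}) (u v x y z : T).

Definition edge_rel E : rel T := fun x y => [set x; y] \in E.
Definition degree K v := #|[set e in K | v \in e]|.
Definition even_edges K := forall v, ~~ odd (degree K v).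
Definition joins K x y := forall v, odd (degree K v) = (v == x) (+) (v == y).
Definition joinable E x y := exists2 K : {set {set T}}, K \subset E & joins K x y.

Lemma symd_sub E K P : K \subset E -> P \subset E -> symd K P \subset E.
Proof.
move=> /subsetP KE /subsetP PE; apply/subsetP => e.
by rewrite in_symd; case: (boolP (e \in K)) => [/KE|_ /PE].
Qed.

Lemma edge_rel_sym E : symmetric (edge_rel E).
Proof. by move=> x y; rewrite /edge_rel setUC. Qed.

Lemma odd_degree_symd K P v :
  odd (degree (symd K P) v) = odd (degree K v) (+) odd (degree P v).
Proof.
rewrite /degree -odd_card_symd; congr (odd #|pred_of_set _|).
by apply/setP => e; rewrite !inE; case: (e \in K); case: (e \in P); case: (v \in e).
Qed.

Lemma even_edges_symd K P : even_edges K -> even_edges P -> even_edges (symd K P).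
Proof.
by move=> K_even P_even v; rewrite odd_degree_symd (negbTE (K_even v)) (negbTE (P_even v)).
Qed.

Lemma joins0 x : joins set0 x x.
Proof.
move=> v; rewrite addbb /degree (_ : [set e in set0 | _] = set0) ?cards0 //.
by apply/setP => e; rewrite !inE.
Qed.

Lemma degree_set1 e v : degree [set e] v = (v \in e).
Proof.
rewrite /degree; case: (boolP (v \in e)) => ve.
  by rewrite (_ : [set _ in _ | _] = [set e]) ?cards1 //; apply/setP => f; rewrite !inE;
     case: eqP => // ->.
by rewrite (_ : [set _ in _ | _] = set0) ?cards0 //; apply/setP => f; rewrite !inE;
   case: eqP => // ->; rewrite (negbTE ve).
Qed.

Lemma joins_edge x y : x != y -> joins [set [set x; y]] x y.
Proof.
move=> xy v; rewrite degree_set1 !inE.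
by case: eqP => [->|]; [rewrite (negbTE xy) | case: eqP].
Qed.

Lemma joins_symd K P x y z : joins K x y -> joins P y z -> joins (symd K P) x z.
Proof.
move=> Kxy Pyz v; rewrite odd_degree_symd Kxy Pyz.
by case: (v == x); case: (v == y); case: (v == z).
Qed.

Lemma joins_sym K x y : joins K x y -> joins K y x.
Proof. by move=> Kxy v; rewrite Kxy addbC. Qed.

Lemma even_edgesE K x : even_edges K <-> joins K x x.
Proof. by split=> h v; [rewrite addbb; apply/negbTE | rewrite h addbb]. Qed.

Lemma joinable_sym E x y : joinable E x y -> joinable E y x.
Proof. by case=> K KE /joins_sym; exists K. Qed.

Lemma joinable_trans E x y z : joinable E x y -> joinable E y z -> joinable E x z.
Proof.
by case=> K KE Kxy [P PE Pyz]; exists (symd K P); [apply: symd_sub | apply: joins_symd Pyz].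
Qed.

End EdgeSets.

Section Graphs.
Variable T : finType.
Implicit Types (G : rel T) (E F : {set {set T}}) (u v x y p q : T).

Lemma set2_upair x y p q : [set x; y] = [set p; q] -> upair x y p q.
Proof.
move/setP => E; move: (E x) (E y) (E p) (E q); rewrite /upair !inE !eqxx /=.
by do ![case: eqP => //= ?; subst] => //; rewrite ?eqxx ?orbT.
Qed.

Lemma upair_set2 x y p q : upair x y p q -> [set x; y] = [set p; q].
Proof. by case/orP => /andP[/eqP -> /eqP ->] //; rewrite setUC. Qed.

Lemma set2_eqE x y p q : ([set x; y] == [set p; q]) = upair x y p q.
Proof. by apply/eqP/idP => [/set2_upair|/upair_set2]. Qed.

Lemma upairC x y p q : upair y x p q = upair x y p q.
Proof. by rewrite /upair; case: (x == p); case: (y == q); case: (x == q); case: (y == p). Qed.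

Lemma upair_swap x y p q : upair x y q p = upair x y p q.
Proof. by rewrite /upair orbC. Qed.

Lemma in_edges G x y : symmetric G -> ([set x; y] \in edges G) = G x y.
Proof.
move=> Gsym; apply/imsetP/idP => [[[p q]]|Gxy]; last by exists (x, y); rewrite ?inE.
by rewrite inE /= => Gpq /set2_upair /orP[] /andP[/eqP -> /eqP ->]; rewrite // Gsym.
Qed.

Lemma edgesP G e : e \in edges G -> exists x y, e = [set x; y] /\ G x y.
Proof. by case/imsetP => [[x y]]; rewrite inE /= => Gxy ->; exists x, y. Qed.

Lemma edge_in_cover F x y : [set x; y] \in F -> x \in cover F.
Proof. by move=> xyF; apply/bigcupP; exists [set x; y]; rewrite // !inE eqxx. Qed.

Lemma cycle_even G F : is_cycle G F -> even_edges F.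
Proof.
case=> _ _ deg2 _ v; case: (boolP (v \in cover F)) => [/deg2|vF]; rewrite /degree.
  by move=> ->.
rewrite (_ : [set _ in _ | _] = set0) ?cards0 //; apply/setP => e; rewrite !inE.
by apply/negP => /andP[eF ve]; case/bigcupP: vF; exists e.
Qed.

Lemma cycle_connect G F x y : symmetric G -> is_cycle G F ->
  x \in cover F -> y \in cover F -> connect G x y.
Proof.
move=> Gsym [FE _ _ Fconn] xF yF; apply: connect_sub (Fconn x y xF yF) => u v uvF.
by apply: connect1; rewrite -in_edges //; apply: (subsetP FE).
Qed.

Lemma forward_closed_connect G (S : {set T}) x y :
  (forall u v, u \in S -> G u v -> v \in S) -> x \in S -> connect G x y -> y \in S.
Proof.
move=> S_closed xS /connectP[p + ->]; elim: p x xS => [|z p IHp] x xS //=.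
by case/andP=> /(S_closed _ _ xS) /IHp.
Qed.

Definition one_cycle_per_component G :=
  forall F1 F2 u v, is_cycle G F1 -> is_cycle G F2 ->
    u \in cover F1 -> v \in cover F2 -> connect G u v -> F1 = F2.

Lemma connect_restrict G (S : {set T}) x y :
  (forall u v, u \in S -> G u v -> v \in S) -> x \in S -> connect G x y ->
  connect (restrict G S) x y.
Proof.
move=> S_closed xS /connectP[p + ->]; elim: p x xS => [|z p IHp] x xS //=.
case/andP=> Gxz /(IHp z (S_closed _ _ xS Gxz)); apply: connect_trans; apply: connect1.
by rewrite /restrict xS (S_closed _ _ xS Gxz).
Qed.

Lemma restrict_sym G (S : {set T}) : symmetric G -> symmetric (restrict G S).
Proof. by move=> Gsym x y; rewrite /restrict Gsym andbCA. Qed.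

Lemma cycle_cover_neq0 G F : is_cycle G F -> cover F != set0.
Proof.
case=> FG /set0Pn[e eF] _ _; have [x [y [def_e _]]] := edgesP (subsetP FG _ eF).
by apply/set0Pn; exists x; apply: (@edge_in_cover _ _ y); rewrite -def_e.
Qed.

Section SimpleGraph.
Variable H : rel T.
Hypotheses (Hsym : symmetric H) (Hirr : irreflexive H).

Lemma edges_neq x y : [set x; y] \in edges H -> x != y.
Proof. by rewrite in_edges //; apply: contraTneq => ->; rewrite Hirr. Qed.

Lemma connect_joinable E x y : E \subset edges H ->
  connect (edge_rel E) x y -> joinable E x y.
Proof.
move=> EH /connectP[p + ->]; elim: p x => [|z p IHp] x /=.
  by exists set0; [apply: sub0set | apply: joins0].
case/andP=> xzE /IHp; apply: joinable_trans; exists [set [set x; z]].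
  by rewrite sub1set.
by apply/joins_edge/edges_neq/(subsetP EH).
Qed.

End SimpleGraph.
End Graphs.

Section EvenCycle.
Variables (T : finType) (H : rel T).
Hypotheses (Hsym : symmetric H) (Hirr : irreflexive H).
Implicit Types (K F : {set {set T}}).

Section SeqCycle.
Variables (E : {set {set T}}) (s : seq T).
Hypotheses (EH : E \subset edges H) (s_uniq : uniq s) (s_size : 2 < size s).
Hypothesis s_cycle : cycle (edge_rel E) s.

Let F := [set [set x; next s x] | x in s].

Lemma seq_cycle_sub : F \subset E.
Proof. by apply/subsetP => _ /imsetP[x xs ->]; apply: next_cycle s_cycle xs. Qed.

Lemma next_neq x : x \in s -> next s x != x.
Proof.
move=> xs; rewrite eq_sym; apply: (edges_neq Hsym Hirr).
exact/(subsetP EH)/(next_cycle s_cycle xs).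
Qed.

Lemma next_next_neq x : x \in s -> next s (next s x) != x.
Proof.
move=> xs; have [i s' def_s] := rot_to xs.
rewrite -!(next_rot i s_uniq) def_s.
have : uniq (x :: s') by rewrite -def_s rot_uniq.
have : 2 < size (x :: s') by rewrite -def_s size_rot.
case: s' {def_s} => [|y [|z r]] //= _; rewrite !inE !negb_or eqxx.
by case/and4P=> /and3P[xy xz _] _ _ _; rewrite eq_sym in xy; rewrite (negbTE xy) eqxx eq_sym.
Qed.

Lemma seq_cycle_is_cycle : is_cycle H F.
Proof.
have nextF x : x \in s -> [set x; next s x] \in F by move=> xs; apply: imset_f.
have coverF v : v \in cover F -> v \in s.
  by case/bigcupP=> _ /imsetP[x xs ->]; rewrite !inE => /orP[] /eqP->; rewrite ?mem_next.
split.
- exact: subset_trans seq_cycle_sub EH.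
- by case: s s_size nextF => // x s' _ nextF; apply/set0Pn; exists [set x; next (x :: s') x];
    apply: nextF; rewrite mem_head.
- move=> v /coverF vs.
  have -> : [set e in F | v \in e] = [set [set v; next s v]; [set prev s v; v]].
    apply/setP => e; rewrite !inE; apply/andP/orP => [[/imsetP[x xs ->]]|].
      by rewrite !inE => /orP[] /eqP->; [left | right; rewrite (prev_next s_uniq)].
    case=> /eqP->; rewrite !inE eqxx ?orbT; split => //; first exact: nextF.
    by have := nextF (prev s v); rewrite (next_prev s_uniq) mem_prev; apply.
  rewrite cards2; congr (_.+1); apply/eqP; rewrite eqb1.
  apply/eqP => /set2_upair; rewrite /upair eqxx /= => /orP[/andP[_ /eqP E']|/eqP E'].
    by move: (next_neq vs); rewrite E' eqxx.
  by move: (next_next_neq vs); rewrite E' (next_prev s_uniq) eqxx.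
- move=> u v /coverF us /coverF vs.
  have : fconnect (next s) u v by rewrite (fconnect_cycle (cycle_next s_uniq) us).
  apply: connect_sub => x _ /eqP <-.
  case: (boolP (x \in s)) => xs; first exact/connect1/nextF.
  by rewrite next_nth (negbTE xs) connect0.
Qed.

End SeqCycle.

Section FindCycle.
Variable K : {set {set T}}.
Hypotheses (KH : K \subset edges H) (K_even : even_edges K).
Local Notation e := (edge_rel K).

Lemma edge_rel_neq x y : e x y -> x != y.
Proof. by move=> /(subsetP KH); apply: edges_neq. Qed.

Lemma even_edges_other x y : e x y -> exists2 z, e x z & z != y.
Proof.
move=> exy; set A := [set f in K | x \in f].
have xyA : [set x; y] \in A by rewrite !inE eqxx andbT.
have : 0 < #|A :\ [set x; y]|.
  by have := K_even x; rewrite /degree -/A (cardsD1 [set x; y] A) xyA; case: #|_|.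
case/card_gt0P => f; rewrite !inE => /andP[fxy /andP[fK xf]].
have [p [q [def_f _]]] := edgesP (subsetP KH _ fK).
move: xf fK fxy; rewrite def_f !inE => /orP[] /eqP <- fK fxy.
  by exists q => //; apply: contraNneq fxy => ->.
by exists p; [rewrite /edge_rel setUC | apply: contraNneq fxy => ->; rewrite setUC].
Qed.

Lemma uniq_path_extend_or_close x q : q != [::] -> uniq (x :: q) -> path e x q ->
  (exists s, [/\ uniq s, 2 < size s & cycle e s]) \/ exists2 z, z \notin x :: q & e z x.
Proof.
case: q => [//|h q] _ xq_uniq xq_path; have /andP[exh _] := xq_path.
have [z exz zh] := even_edges_other exh.
case: (boolP (z \in x :: h :: q)) => [|zxq]; last by right; exists z; rewrite // edge_rel_sym.
rewrite in_cons eq_sym (negbTE (edge_rel_neq exz)) /= => zhq.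
have [q1 [q2 def_hq]] : exists q1 q2, h :: q = q1 ++ z :: q2.
  by case/splitPr: zhq => q1 q2; exists q1, q2.
rewrite def_hq in xq_uniq xq_path; left; exists (x :: rcons q1 z); split.
- by move: xq_uniq; rewrite -cat_rcons /= mem_cat cat_uniq => /andP[/norP[-> _] /andP[-> _]].
- by rewrite /= size_rcons; case: q1 def_hq {xq_uniq xq_path} => // -[hz _]; rewrite hz eqxx in zh.
- rewrite /= rcons_path last_rcons rcons_path [e z x]edge_rel_sym exz andbT.
  by move: xq_path; rewrite cat_path => /andP[-> /= /andP[-> _]].
Qed.

Lemma even_edges_seq_cycle : K != set0 -> exists s, [/\ uniq s, 2 < size s & cycle e s].
Proof.
case/set0Pn => f fK; have [x [y [def_f _]]] := edgesP (subsetP KH _ fK).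
have exy : e x y by rewrite /edge_rel -def_f.
(* Extend a duplicate-free path at its head until it closes up; n bounds the
   number of extensions, since the path has at most #|T| vertices. *)
suff grow n x' q : #|T| - size q < n -> q != [::] -> uniq (x' :: q) -> path e x' q ->
    exists s, [/\ uniq s, 2 < size s & cycle e s].
  by apply: (grow #|T|.+1 x [:: y]); rewrite /= ?ltnS ?leq_subr ?inE ?andbT ?(edge_rel_neq exy).
elim: n x' q => // n IHn x' q lt_n q0 xq_uniq xq_path.
case: (uniq_path_extend_or_close q0 xq_uniq xq_path) => // -[z zxq ezx].
have zxq_uniq : uniq (z :: x' :: q) by rewrite /= zxq.
apply: (IHn z (x' :: q)) => //=; last by rewrite ezx.
have := max_card (mem (z :: x' :: q)); rewrite (card_uniqP zxq_uniq) /= => lt_qT.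
by rewrite -ltnS subnSK // ltnW.
Qed.

End FindCycle.

Lemma even_edges_cycle K : K \subset edges H -> even_edges K -> K != set0 ->
  exists2 F : {set {set T}}, F \subset K & is_cycle H F.
Proof.
move=> KH K_even /(even_edges_seq_cycle KH K_even)[s [s_uniq s_size s_cycle]].
by exists [set [set x; next s x] | x in s];
  [apply: seq_cycle_sub s_cycle | apply: seq_cycle_is_cycle s_uniq s_size s_cycle].
Qed.

End EvenCycle.

Section TwoSwitch.
Variables (T : finType) (U : rel T) (a b c d : T).
Hypotheses (Usym : symmetric U) (abcd : interchangeable U a b c d).
Local Notation G := (two_switch U a b c d).

Lemma two_switchE x y : G x y =
  (U x y && ~~ (upair x y a b || upair x y c d)) || upair x y a c || upair x y b d.
Proof. by rewrite /two_switch abcd. Qed.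

Lemma two_switch_sym : symmetric G.
Proof. by move=> x y; rewrite !two_switchE Usym !(upairC x y). Qed.

Lemma edges_two_switch :
  edges G = (edges U :\: [set [set a; b]; [set c; d]]) :|: [set [set a; c]; [set b; d]].
Proof.
apply/setP => e; rewrite !inE; apply/idP/idP => [/edgesP[x [y [-> Gxy]]]|].
  by move: Gxy; rewrite two_switchE in_edges // !set2_eqE negb_or andbC -!orbA.
have Gedge x y : ([set x; y] \in edges G) = G x y by apply/in_edges/two_switch_sym.
case/orP=> [/andP[xy_abcd /edgesP[x [y [def_e Uxy]]]]|/orP[]/eqP->].
- by rewrite def_e !set2_eqE in xy_abcd; rewrite def_e Gedge two_switchE Uxy xy_abcd.
- by rewrite Gedge two_switchE /upair !eqxx !orbT.
- by rewrite Gedge two_switchE /upair !eqxx !orbT.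
Qed.

Lemma interchangeable_swap : interchangeable U b a d c.
Proof.
move: abcd; rewrite /interchangeable => /and5P[Uab Ucd ac ad /and4P[bc bd Uac Ubd]].
by rewrite Usym Uab [U d c]Usym Ucd bd bc ad ac Ubd Uac.
Qed.

Lemma two_switch_swap : two_switch U b a d c = G.
Proof.
apply: functional_extensionality => x; apply: functional_extensionality => y.
rewrite /two_switch abcd interchangeable_swap.
by rewrite (upair_swap x y b a) (upair_swap x y d c) orbAC.
Qed.

End TwoSwitch.

Section Unicyclic.
Variables (T : finType) (U : rel T) (C : {set {set T}}).
Hypotheses (Usym : symmetric U) (Uirr : irreflexive U).
Hypotheses (C_cycle : is_cycle U C) (C_unique : forall F, is_cycle U F -> F = C).
Implicit Types (E K F : {set {set T}}) (x y : T).

Lemma cycle_sub_edges : C \subset edges U.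
Proof. by case: C_cycle. Qed.

Lemma even_edges_unicyclic K : K \subset edges U -> even_edges K -> K = set0 \/ K = C.
Proof.
move=> KU K_even; have [->|K0] := eqVneq K set0; [by left | right].
have [F FK /C_unique def_F] := even_edges_cycle Usym Uirr KU K_even K0.
rewrite {F}def_F in FK.
(* Otherwise the even set K - C would contain a cycle, i.e. C, although C is in K. *)
have [/symd_eq0 //|KC0] := eqVneq (symd K C) set0.
have KC_U : symd K C \subset edges U by apply: symd_sub KU cycle_sub_edges.
have KC_even := even_edges_symd K_even (cycle_even C_cycle).
have [F FKC /C_unique def_F] := even_edges_cycle Usym Uirr KC_U KC_even KC0.
rewrite {F}def_F in FKC; case: C_cycle => _ /set0Pn[f fC] _ _.
by have := subsetP FKC f fC; rewrite in_symd fC (subsetP FK f fC).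
Qed.

Lemma joins_unicyclic K x y : K \subset edges U -> joins K x y -> U x y ->
  [set x; y] \notin K -> [set x; y] \in C /\ K = C :\ [set x; y].
Proof.
move=> KU Kxy Uxy xyK; have xy : x != y by apply: contraTneq Uxy => ->; rewrite Uirr.
set K' := symd K [set [set x; y]].
have K'U : K' \subset edges U by apply: symd_sub; rewrite // sub1set in_edges.
have K'_even : even_edges K'.
  by apply/(even_edgesE _ x)/(joins_symd Kxy)/joins_sym/joins_edge.
have xyK' : [set x; y] \in K' by rewrite in_symd (negbTE xyK) inE eqxx.
have [K'0|K'C] := even_edges_unicyclic K'U K'_even; first by rewrite K'0 inE in xyK'.
rewrite -K'C; split=> //; apply/setP => e; rewrite !inE.
by case: eqP => [->|_] /=; rewrite ?(negbTE xyK) ?andbF ?orbF.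
Qed.

Lemma cycle_chord x y : x \in cover C -> y \in cover C -> U x y -> [set x; y] \in C.
Proof.
move=> xC yC Uxy; apply/negPn/negP => xyC; case: (C_cycle) => _ _ _ C_connect.
have [W WC Wxy] := connect_joinable Usym Uirr cycle_sub_edges (C_connect x y xC yC).
have xyW : [set x; y] \notin W by apply: contra xyC; apply: (subsetP WC).
have [xyC' _] := joins_unicyclic (subset_trans WC cycle_sub_edges) Wxy Uxy xyW.
by rewrite xyC' in xyC.
Qed.

Lemma not_joinable_unicyclic E x y f : E \subset edges U -> U x y ->
  [set x; y] \notin E -> f \in C -> f != [set x; y] -> f \notin E -> ~ joinable E x y.
Proof.
move=> EU Uxy xyE fC f_xy fE [K KE Kxy].
have xyK : [set x; y] \notin K by apply: contra xyE; apply: (subsetP KE).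
have [_ def_K] := joins_unicyclic (subset_trans KE EU) Kxy Uxy xyK.
by move: fE; rewrite (subsetP KE) // def_K !inE f_xy.
Qed.

Section Switch.
Variables a b c d : T.
Hypothesis abcd : interchangeable U a b c d.
Hypotheses (C_ab : [set a; b] \in C) (C_cd : [set c; d] \in C).
Local Notation G := (two_switch U a b c d).
Let E0 := edges U :\: [set [set a; b]; [set c; d]].
Let E0_U : E0 \subset edges U := subsetDl _ _.
Let Gsym : symmetric G := two_switch_sym Usym abcd.

Let Uab : U a b. Proof. by case/andP: abcd. Qed.
Let Ucd : U c d. Proof. by case/and3P: abcd. Qed.
Let ac : a != c. Proof. by case/and4P: abcd. Qed.
Let ad : a != d. Proof. by case/and5P: abcd. Qed.
Let bc : b != c. Proof. by case/and5P: abcd => _ _ _ _ /andP[]. Qed.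

Lemma cd_neq_ab : [set c; d] != [set a; b].
Proof.
rewrite set2_eqE; apply/negP => /orP[] /andP[/eqP ca /eqP da].
  by move: ac; rewrite ca eqxx.
by move: ad; rewrite da eqxx.
Qed.

Lemma bd_neq_ac : [set b; d] != [set a; c].
Proof.
rewrite set2_eqE; apply/negP => /orP[] /andP[/eqP bx _].
  by move: Uab; rewrite bx Uirr.
by move: bc; rewrite bx eqxx.
Qed.

Lemma switch_sub_E0 K : K \subset edges G ->
  [set a; c] \notin K -> [set b; d] \notin K -> K \subset E0.
Proof.
move=> /subsetP KG acK bdK; apply/subsetP => e eK.
move: (KG e eK); rewrite edges_two_switch // in_setU !inE => /orP[//|/orP[]/eqP def_e].
  by rewrite -def_e eK in acK.
by rewrite -def_e eK in bdK.
Qed.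

Lemma even_E0_eq0 K : K \subset E0 -> even_edges K -> K = set0.
Proof.
move=> KE0 K_even; case: (even_edges_unicyclic (subset_trans KE0 E0_U) K_even) => // KC.
by rewrite KC in KE0; have := subsetP KE0 _ C_ab; rewrite !inE eqxx.
Qed.

Lemma not_joinable_E0_ab : ~ joinable E0 a b.
Proof. by apply: (not_joinable_unicyclic E0_U Uab _ C_cd cd_neq_ab); rewrite !inE eqxx ?orbT. Qed.

Lemma not_joinable_E0_cd : ~ joinable E0 c d.
Proof.
apply: (not_joinable_unicyclic E0_U Ucd _ C_ab); rewrite 1?eq_sym ?cd_neq_ab //;
  by rewrite !inE eqxx ?orbT.
Qed.

Lemma switch_cycle_meets F : is_cycle G F -> ([set a; c] \in F) || ([set b; d] \in F).
Proof.
move=> F_cycle; apply/negPn/negP => /norP[acF bdF]; case: (F_cycle) => FG F0 _ _.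
by move: F0; rewrite (even_E0_eq0 (switch_sub_E0 FG acF bdF) (cycle_even F_cycle)) eqxx.
Qed.

Lemma switch_cycle_eq F1 F2 : is_cycle G F1 -> is_cycle G F2 ->
  ([set a; c] \in F1) = ([set a; c] \in F2) -> ([set b; d] \in F1) = ([set b; d] \in F2) ->
  F1 = F2.
Proof.
move=> F1_cycle F2_cycle ac12 bd12; apply/symd_eq0/even_E0_eq0.
  by apply: switch_sub_E0; rewrite ?in_symd ?ac12 ?bd12 ?addbb //;
    apply: symd_sub; [case: F1_cycle | case: F2_cycle].
exact: even_edges_symd (cycle_even F1_cycle) (cycle_even F2_cycle).
Qed.

Lemma switch_connect_joinable w : joinable E0 a c -> connect G a w -> joinable E0 a w.
Proof.
(* The union S of the E0-components of a and c avoids b and d, hence is closed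
   under the switched graph. *)
move=> ac_E0; set S := [set w | connect (edge_rel E0) a w || connect (edge_rel E0) c w].
have S_E0 x : x \in S -> joinable E0 a x.
  by rewrite inE => /orP[] /(connect_joinable Usym Uirr E0_U) //; apply: joinable_trans.
have bS : b \notin S by apply/negP => /S_E0; apply: not_joinable_E0_ab.
have dS : d \notin S.
  by apply/negP => /S_E0 /(joinable_trans (joinable_sym ac_E0)); apply: not_joinable_E0_cd.
have S_closed x y : x \in S -> G x y -> y \in S.
  move=> xS; rewrite -(in_edges _ _ Gsym) edges_two_switch // in_setU => /orP[xyE0|].
    by move: xS; rewrite !inE => /orP[] h; apply/orP; [left | right];
      apply: connect_trans h (connect1 xyE0).
  rewrite !inE => /orP[] /eqP xy.
    have : y \in [set a; c] by rewrite -xy !inE eqxx orbT.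
    by rewrite !inE => /orP[] /eqP->; rewrite connect0 ?orbT.
  have : x \in [set b; d] by rewrite -xy !inE eqxx.
  by rewrite !inE => /orP[] /eqP x_bd; rewrite x_bd ?(negbTE bS) ?(negbTE dS) in xS.
by move/(forward_closed_connect S_closed)/S_E0; apply; rewrite inE connect0.
Qed.

Lemma switch_cycle_separates F : is_cycle G F ->
  [set a; c] \in F -> [set b; d] \notin F -> ~ connect G a b.
Proof.
move=> F_cycle acF bdF /switch_connect_joinable ab_E0; apply: not_joinable_E0_ab.
apply: ab_E0; exists (symd F [set [set a; c]]).
  have [FG _ _ _] := F_cycle; apply: switch_sub_E0.
  - by rewrite symd_sub // sub1set edges_two_switch // !inE eqxx orbT.
  - by rewrite in_symd acF inE eqxx.
  - by rewrite in_symd (negbTE bdF) inE (negbTE bd_neq_ac).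
exact: joins_symd ((even_edgesE _ a).1 (cycle_even F_cycle)) (joins_edge ac).
Qed.

End Switch.

Lemma switch_cycle_separates_xor a b c d F : interchangeable U a b c d ->
  [set a; b] \in C -> [set c; d] \in C -> is_cycle (two_switch U a b c d) F ->
  ([set a; c] \in F) != ([set b; d] \in F) -> ~ connect (two_switch U a b c d) a b.
Proof.
move=> abcd C_ab C_cd F_cycle; case: (boolP ([set a; c] \in F)) => /= acF.
  by move/negPn/negP; apply: switch_cycle_separates.
move=> /negPn bdF; rewrite (sym_connect_sym (two_switch_sym Usym abcd)).
rewrite -(two_switch_swap Usym abcd) in F_cycle *.
have C_ba : [set b; a] \in C by rewrite setUC.
have C_dc : [set d; c] \in C by rewrite setUC.
exact: (switch_cycle_separates (interchangeable_swap Usym abcd) C_ba C_dc F_cycle).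
Qed.

Lemma switch_one_cycle_per_component a b c d : interchangeable U a b c d ->
  [set a; b] \in C -> [set c; d] \in C -> one_cycle_per_component (two_switch U a b c d).
Proof.
move=> abcd C_ab C_cd F1 F2 u v F1_cycle F2_cycle uF1 vF2 uv.
have Gsym := two_switch_sym Usym abcd.
case: (boolP ((([set a; c] \in F1) == ([set a; c] \in F2)) &&
              (([set b; d] \in F1) == ([set b; d] \in F2)))) => [/andP[/eqP A12 /eqP B12]|types].
  exact: (switch_cycle_eq abcd C_ab F1_cycle F2_cycle A12 B12).
have to_u w : w \in cover F1 :|: cover F2 -> connect (two_switch U a b c d) w u.
  rewrite inE => /orP[] wF; first exact: cycle_connect Gsym F1_cycle wF uF1.
  rewrite (sym_connect_sym Gsym); exact: connect_trans uv (cycle_connect Gsym F2_cycle vF2 wF).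
have aW : ([set a; c] \in F1) || ([set a; c] \in F2) -> a \in cover F1 :|: cover F2.
  by rewrite inE => /orP[] /edge_in_cover ->; rewrite ?orbT.
have bW : ([set b; d] \in F1) || ([set b; d] \in F2) -> b \in cover F1 :|: cover F2.
  by rewrite inE => /orP[] /edge_in_cover ->; rewrite ?orbT.
have [A B X] : [/\ ([set a; c] \in F1) || ([set a; c] \in F2),
    ([set b; d] \in F1) || ([set b; d] \in F2)
  & (([set a; c] \in F1) != ([set b; d] \in F1)) ||
    (([set a; c] \in F2) != ([set b; d] \in F2))].
  move: (switch_cycle_meets abcd C_ab F1_cycle) (switch_cycle_meets abcd C_ab F2_cycle) types.
  by case: ([set a; c] \in F1); case: ([set a; c] \in F2); case: ([set b; d] \in F1);
     case: ([set b; d] \in F2).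
have ab : connect (two_switch U a b c d) a b.
  by apply: connect_trans (to_u a (aW A)) _; rewrite sym_connect_sym //; apply: to_u (bW B).
have sep := switch_cycle_separates_xor abcd C_ab C_cd.
by case/orP: X => [/(sep _ F1_cycle) | /(sep _ F2_cycle)].
Qed.

End Unicyclic.

Section PseudoforestCriterion.
Variables (T : finType) (G : rel T).
Hypothesis Gsym : symmetric G.
Implicit Types (F : {set {set T}}) (S : {set T}).

Lemma component_connected x : connected_on G (component G x).
Proof.
have xx : x \in component G x by rewrite inE connect0.
have closed u v : u \in component G x -> G u v -> v \in component G x.
  by rewrite !inE => xu /connect1; apply: connect_trans.
split=> [|y z]; first by apply/set0Pn; exists x.
rewrite !inE => xy xz; apply: connect_trans (connect_restrict closed xx xz).
by rewrite (sym_connect_sym (restrict_sym _ Gsym)) (connect_restrict closed xx xy).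
Qed.

Lemma restrict_cycle S F : is_cycle (restrict G S) F -> is_cycle G F /\ {subset cover F <= S}.
Proof.
case=> FE F0 F_deg F_conn.
have sub : edges (restrict G S) \subset edges G.
  by apply/subsetP => _ /edgesP[x [y [-> /and3P[_ _ Gxy]]]]; rewrite in_edges.
split; first by split=> //; apply: subset_trans FE sub.
move=> v /bigcupP[e eF ve]; have [x [y [def_e /and3P[xS yS _]]]] := edgesP (subsetP FE _ eF).
by move: ve; rewrite def_e !inE => /orP[]/eqP->.
Qed.

Lemma one_cycle_per_component_pseudoforest : one_cycle_per_component G -> pseudoforest G.
Proof.
move=> cycle_uniq x; set S := component G x.
have S_conn y z : y \in S -> z \in S -> connect G y z.
  by rewrite !inE => xy; apply: connect_trans; rewrite sym_connect_sym.
case: (classic (exists F, is_cycle (restrict G S) F)) => [[F0 F0_cycle]|no_cycle]; last first.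
  by left; split=> [|F F_cycle]; [apply: component_connected | apply: no_cycle; exists F].
right; split; first exact: component_connected.
exists F0; split=> // F F_cycle.
have [FG FS] := restrict_cycle F_cycle; have [F0G F0S] := restrict_cycle F0_cycle.
have /set0Pn[u uF] := cycle_cover_neq0 FG; have /set0Pn[v vF0] := cycle_cover_neq0 F0G.
exact: (cycle_uniq _ _ _ _ FG F0G uF vF0 (S_conn u v (FS u uF) (F0S v vF0))).
Qed.

End PseudoforestCriterion.

Lemma restrict_setT (T : finType) (G : rel T) : restrict G setT = G.
Proof.
apply: functional_extensionality => x; apply: functional_extensionality => y.
by rewrite /restrict !inE.
Qed.

Theorem lemma4p4 (T : finType) (U : rel T)
  (Usym : symmetric U) (Uirr : irreflexive U) (a b c d : T) :
  unicyclic U ->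
  (* ab and cd are edges of Cycles(U) *)
  U a b -> on_cycle U a -> on_cycle U b ->
  U c d -> on_cycle U c -> on_cycle U d ->
  (* the 2-switch is nontrivial *)
  interchangeable U a b c d ->
  p_switch U a b c d.
Proof.
move=> U_unicyclic Uab aC bC Ucd cC dC abcd.
move: U_unicyclic; rewrite /unicyclic /unicyclic_on restrict_setT => -[_ [C [C_cycle C_unique]]].
have onC v : on_cycle U v -> v \in cover C by case=> F [/C_unique <-].
have C_ab := cycle_chord Usym Uirr C_cycle C_unique (onC a aC) (onC b bC) Uab.
have C_cd := cycle_chord Usym Uirr C_cycle C_unique (onC c cC) (onC d dC) Ucd.
split=> //; apply: one_cycle_per_component_pseudoforest.
- exact: Usym.
- by move=> F1 F2 u v /C_unique -> /C_unique ->.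
- exact: two_switch_sym.
- exact: (switch_one_cycle_per_component Usym Uirr C_cycle C_unique abcd C_ab C_cd).
Qed.
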